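(* Fix $k>0$ and $\eta\in\mathbb{R}^{n-r}$ with $\mathrm{int}(\Omega_\eta)\ne\emptyset$ such that $\partial\Omega_\eta$ contains no zero of $g_\eta(k,\cdot)$, and suppose that $g_\eta(k,\xi)=0$, $\xi\in\Omega_\eta$, has more than one solution, all of them regular. Then $a_r(v,x)$, written as a polynomial in $v_1,\dots,v_m,x_1^{-1},\dots,x_n^{-1}$ with like monomials collected, has at least one monomial with a negative coefficient.
   Context: Mass-action network with species $A_1,\dots,A_n$, reactions $\sum_{i}\alpha_{ij}A_i\xrightarrow{k_j}\sum_i\beta_{ij}A_i$ ($j=1,\dots,m$), nonnegative integer coefficients, rate constants $k>0$, rate functions $v_j(k,x)=k_j\prod_i x_i^{\alpha_{ij}}$, stoichiometric matrix $N_{ij}=\beta_{ij}-\alpha_{ij}$ of rank $r$, model $\dot x=Nv(k,x)$. Standing assumption: some $\lambda\in\mathbb{R}^n_{>0}$ satisfies $\lambda^TN=0$. $S\in\mathbb{R}^{n\times r}$: columns an orthonormal basis of $\mathrm{im}(N)$; $Z\in\mathbb{R}^{n\times(n-r)}$: columns an orthonormal basis of $\ker(N^T)$. $g_\eta(k,\xi)=S^TNv(k,S\xi+Z\eta)$; $\Omega_\eta=\{\xi\in\mathbb{R}^r: S\xi+Z\eta\ge0\}$, $\mathrm{int}(\Omega_\eta)=\{\xi: S\xi+Z\eta>0\}$, $\partial\Omega_\eta=\Omega_\eta\setminus\mathrm{int}(\Omega_\eta)$. $J(v,x)$ is the $n\times n$ matrix with $J_{il}=\sum_j N_{ij}\alpha_{lj}v_j/x_l$;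 it is assumed that $\mathrm{im}(J(v,x))=\mathrm{im}(N)$; $a_r(v,x)$ is the sum of all principal minors of order $r$ of $-J(v,x)$. A zero $\xi$ of $g_\eta(k,\cdot)$ is regular if $a_r(v(k,x),x)\ne0$ at $x=S\xi+Z\eta$. *)

(* Mass-action networks; real numbers modelled by an
   arbitrary real closed field R. *)
From HB Require Import structures.
From mathcomp Require Import all_boot all_order all_algebra all_fingroup.
Set Implicit Arguments. Unset Strict Implicit. Unset Printing Implicit Defensive.
Import Order.TTheory GRing.Theory Num.Theory.
Local Open Scope ring_scope.

Section Network.
Variables (R : rcfType) (n m : nat).
Variables (alpha beta : 'M[nat]_(n, m)).

Definition stoich : 'M[R]_(n, m) :=
  \matrix_(i, j) ((beta i j)%:R - (alpha i j)%:R).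

Definition rates (k : 'cV[R]_m) (x : 'cV[R]_n) : 'cV[R]_m :=
  \col_j (k j 0 * \prod_(i < n) (x i 0) ^+ (alpha i j)).

Definition jacJ (v : 'cV[R]_m) (x : 'cV[R]_n) : 'M[R]_n :=
  \matrix_(i, l) \sum_(j < m) stoich i j * (alpha l j)%:R * v j 0 / x l 0.

Definition principal_minor (A : 'M[R]_n) (I : {set 'I_n}) : R :=
  \det (mxsub (fun a : 'I_#|I| => enum_val a) (fun a : 'I_#|I| => enum_val a) A).

Definition a_coef (s : nat) (v : 'cV[R]_m) (x : 'cV[R]_n) : R :=
  \sum_(I : {set 'I_n} | #|I| == s) principal_minor (- jacJ v x) I.

Definition pos_vec p (u : 'cV[R]_p) : Prop := forall i, 0 < u i 0.
Definition nneg_vec p (u : 'cV[R]_p) : Prop := forall i, 0 <= u i 0.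

End Network.

Section Expansion.
Variables (n m : nat) (alpha beta : 'M[nat]_(n, m)).

Definition stoichZ (i : 'I_n) (j : 'I_m) : int := (beta i j)%:Z - (alpha i j)%:Z.

(* a monomial v^e * (x^-1)^d, encoded by its exponent vectors (e, d) *)
Definition monomial := ({ffun 'I_m -> nat} * {ffun 'I_n -> nat})%type.

(* Expanding \det of the principal submatrix of -J on I by the Leibniz formula
   (sum over s) and each entry -J_{il} = sum_j (-N_ij alpha_lj) v_j x_l^-1
   (choice g a of j for row a) yields one term per (s, g): *)
Definition term_coef (I : {set 'I_n}) (s : 'S_#|I|) (g : {ffun 'I_#|I| -> 'I_m}) : int :=
  (-1) ^+ s * \prod_(a < #|I|)
     (- (stoichZ (enum_val a) (g a) * (alpha (enum_val (s a)) (g a))%:Z)).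

Definition term_mon (I : {set 'I_n}) (s : 'S_#|I|) (g : {ffun 'I_#|I| -> 'I_m}) : monomial :=
  ([ffun j => #|[set a | g a == j]|],
   [ffun l => #|[set a | enum_val (s a) == l]|]).

Definition a_poly_coef (s : nat) (mu : monomial) : int :=
  \sum_(I : {set 'I_n} | #|I| == s) \sum_(p : 'S_#|I|)
     \sum_(g : {ffun 'I_#|I| -> 'I_m})
        (if term_mon p g == mu then term_coef p g else 0).

End Expansion.

From HB Require Import structures.
From mathcomp Require Import all_boot all_order all_algebra all_fingroup ring.
From Stdlib Require Import Classical.
Set Implicit Arguments. Unset Strict Implicit. Unset Printing Implicit Defensive.
Import Order.TTheory GRing.Theory Num.Theory.
Local Open Scope ring_scope.

(* Suppose every coefficient of a_r is nonnegative. A regular equilibrium makes a_r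
   nonzero at one positive point, so some coefficient is positive and a_r > 0 on the
   whole positive orthant. Equilibria avoid the boundary, so there are two distinct
   positive equilibria x1, x2 with x1 - x2 = S (xi1 - xi2). Choosing u with the sign
   pattern of log x1 - log x2 (on coordinates and on each alpha_j . u) yields positive
   v, w with J(v, w) (x1 - x2) = N (v(x1) - v(x2)) = 0. Hence S^T (-J(v, w)) S is
   singular, and by Cauchy-Binet its determinant is a_r(v, w) > 0, a contradiction.
   Over a real closed field there is no logarithm; the sign pattern is produced by
   Fourier-Motzkin elimination instead. *)

Section PrincipalMinors.
Variable R : comNzRingType.

Lemma det_mulmx_rowsub r n (B : 'M[R]_(r, n)) (S : 'M[R]_(n, r)) :
  \det (B *m S) =
  \sum_(g : {ffun 'I_r -> 'I_n}) (\prod_i B i (g i)) * \det (rowsub g S).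
Proof.
rewrite /determinant.
under eq_bigr => s _.
  rewrite (eq_bigr (fun i => \sum_k B i k * S k (s i))); last by move=> i _; rewrite mxE.
  rewrite bigA_distr_bigA big_distrr /=.
  over.
rewrite exchange_big /=; apply: eq_bigr => g _.
rewrite big_distrr /=; apply: eq_bigr => s _.
rewrite big_split /= mulrCA; congr (_ * (_ * _)).
by apply: eq_bigr => i _; rewrite mxE.
Qed.

Lemma det_mxsub_perm r n (f : 'I_r -> 'I_n) (s : 'S_r) (A : 'M[R]_n) :
  \det (mxsub (f \o s) (f \o s) A) = \det (mxsub f f A).
Proof.
have -> : mxsub (f \o s) (f \o s) A = row_perm s (col_perm s (mxsub f f A)).
  by apply/matrixP => i j; rewrite !mxE.
rewrite row_permE col_permE !det_mulmx !det_perm odd_permV mulrCA.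
by rewrite -exprD -signr_odd oddD addbb mulr1.
Qed.

Lemma sum_det_mxsub_mulmx r n (S : 'M[R]_(n, r)) (B : 'M[R]_(r, n)) :
  \sum_(g : {ffun 'I_r -> 'I_n}) \det (mxsub g g (S *m B)) = r`!%:R * \det (B *m S).
Proof.
under eq_bigr => g _ do rewrite mxsub_mul det_mulmx /(determinant (colsub _ _)) big_distrr.
rewrite exchange_big /= mulr_natl -(card_Sn r) -sumr_const; apply: eq_bigr => t _.
pose h (g : {ffun 'I_r -> 'I_n}) : {ffun 'I_r -> 'I_n} := [ffun i => g (t^-1 i)%g].
rewrite (reindex h); last first.
  exists (fun g : {ffun 'I_r -> 'I_n} => [ffun i => g (t i)]) => g _;
  by apply/ffunP => i; rewrite !ffunE ?permK ?permKV.
rewrite det_mulmx_rowsub; apply: eq_bigr => g _.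
have -> : rowsub (h g) S = row_perm t^-1 (rowsub g S).
  by apply/matrixP => i j; rewrite !mxE ffunE.
rewrite row_permE det_mulmx det_perm odd_permV.
have -> : \prod_i colsub (h g) B i (t i) = \prod_i B i (g i).
  by apply: eq_bigr => i _; rewrite !mxE ffunE permK.
by rewrite mulrACA -exprD -signr_odd oddD addbb mul1r mulrC.
Qed.

Lemma sum_det_mxsub_injective r n (A : 'M[R]_n) :
  \sum_(g : {ffun 'I_r -> 'I_n}) \det (mxsub g g A) =
  \sum_(g : {ffun 'I_r -> 'I_n} | injectiveb g) \det (mxsub g g A).
Proof.
rewrite [LHS](bigID (fun g : {ffun 'I_r -> 'I_n} => injectiveb g)) /=.
rewrite [X in _ + X]big1 ?addr0 // => g /injectivePn [i [j ij gij]].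
by apply: (determinant_alternate ij) => k; rewrite !mxE gij.
Qed.

Lemma injective_ffun_image r n (I : {set 'I_n}) (E : #|I| = r) :
  [pred g : {ffun 'I_r -> 'I_n} | injectiveb g && ([set g i | i : 'I_r] == I)] =i
  [set [ffun i => enum_val (cast_ord (esym E) (s i))] | s : 'S_r].
Proof.
pose e i : 'I_n := enum_val (cast_ord (esym E) i).
have einj : injective e by move=> i j /enum_val_inj /cast_ord_inj.
move=> g; rewrite inE /=; apply/andP/imsetP => [[/injectiveP ginj /eqP gI] | [s _ ->]].
  have gin i : g i \in I by rewrite -gI imset_f.
  pose s0 i := cast_ord E (enum_rank_in (gin i) (g i)).
  have s0K i : e (s0 i) = g i by rewrite /e /s0 cast_ordK enum_rankK_in.
  have s0inj : injective s0 by move=> i j sij; apply: ginj; rewrite -!s0K sij.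
  by exists (perm s0inj) => //; apply/ffunP => i; rewrite ffunE permE -s0K.
have ginj : injective [ffun i => e (s i)].
  by move=> i j; rewrite !ffunE => /einj /perm_inj.
split; first exact/injectiveP.
rewrite eqEcard card_imset; last exact: ginj.
have -> : (#|I| <= #|'I_r|)%N by rewrite card_ord E.
rewrite andbT.
by apply/subsetP => y /imsetP [i _ ->]; rewrite ffunE /e enum_valP.
Qed.

Lemma sum_det_mxsub_sets r n (A : 'M[R]_n) :
  \sum_(g : {ffun 'I_r -> 'I_n}) \det (mxsub g g A) =
  r`!%:R * \sum_(I : {set 'I_n} | #|I| == r)
     \det (mxsub (fun a : 'I_#|I| => enum_val a) (fun a : 'I_#|I| => enum_val a) A).
Proof.
rewrite sum_det_mxsub_injective.
rewrite (partition_big (fun g : {ffun 'I_r -> 'I_n} => [set g i | i : 'I_r])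
  (fun I : {set 'I_n} => #|I| == r)) /=; last first.
  by move=> g /injectiveP ginj; rewrite card_imset // card_ord.
rewrite mulr_sumr; apply: eq_bigr => I /eqP E.
rewrite (eq_bigl _ _ (injective_ffun_image E)) big_imset /=; last first.
  move=> s t _ _ /ffunP st; apply/permP => i.
  by have := st i; rewrite !ffunE => /enum_val_inj/cast_ord_inj.
pose e i : 'I_n := enum_val (cast_ord (esym E) i).
rewrite (eq_bigr (fun=> \det (mxsub e e A))) => [|s _]; last first.
  rewrite -(det_mxsub_perm e s); congr (\det _).
  by apply/matrixP => i j; rewrite !mxE !ffunE.
rewrite sumr_const card_Sn mulr_natl; congr (_ *+ _).
by rewrite {}/e; case: r / E; congr (\det _); apply/matrixP => i j; rewrite !mxE !cast_ord_id.
Qed.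

End PrincipalMinors.

(* Cauchy-Binet, summed over the principal minors of order [r]. *)
Lemma sum_principal_minors_mulmx (R : numDomainType) n r (S : 'M[R]_(n, r)) (B : 'M[R]_(r, n)) :
  \sum_(I : {set 'I_n} | #|I| == r)
     \det (mxsub (fun a : 'I_#|I| => enum_val a) (fun a : 'I_#|I| => enum_val a) (S *m B))
  = \det (B *m S).
Proof.
apply: (@mulfI _ r`!%:R); first by rewrite pnatr_eq0 -lt0n fact_gt0.
by rewrite -sum_det_mxsub_sets sum_det_mxsub_mulmx.
Qed.

Lemma exists_lt_all (R : realFieldType) (ys : seq R) : exists t, {in ys, forall y, t < y}.
Proof.
elim: ys => [|y ys [t Ht]]; first by exists 0.
exists (Num.min t (y - 1)) => z; rewrite inE => /predU1P [->|zin].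
  by rewrite gt_min ltrBlDr ltrDl ltr01 orbT.
by rewrite gt_min Ht.
Qed.

Lemma exists_between_lt_all (R : realFieldType) (x : R) (ys : seq R) :
  {in ys, forall y, x < y} -> exists t, x < t /\ {in ys, forall y, t < y}.
Proof.
elim: ys => [|y ys IH] H; first by exists (x + 1); rewrite ltrDl ltr01.
have [t [xt Ht]] := IH (fun z zin => H z (@mem_behead _ (y :: ys) _ zin)).
have xy : x < y by apply: H; rewrite mem_head.
exists (Num.min t ((x + y) / 2)); split; first by rewrite lt_min xt midf_lt.
move=> z; rewrite inE => /predU1P [->|zin]; first by rewrite gt_min midf_lt ?orbT.
by rewrite gt_min Ht.
Qed.

Lemma exists_between (R : realFieldType) (xs ys : seq R) :
  {in xs & ys, forall x y, x < y} ->
  exists t, {in xs, forall x, x < t} /\ {in ys, forall y, t < y}.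
Proof.
elim: xs => [|x xs IH] H; first by have [t Ht] := exists_lt_all ys; exists t.
have [t [Hx Hy]] := IH (fun a b ain bin => H a b (@mem_behead _ (x :: xs) _ ain) bin).
case: (ltP x t) => [xt | tx].
  by exists t; split => // z; rewrite inE => /predU1P [->|/Hx].
have [t' [xt' Ht']] := exists_between_lt_all (fun y yin => H x y (mem_head _ _) yin).
exists t'; split => // z; rewrite inE => /predU1P [->|zin] //.
by apply: lt_trans (Hx _ zin) (le_lt_trans tx xt').
Qed.

Lemma sgr_invB1 (R : realFieldType) (x : R) : 0 < x -> Num.sg (x^-1 - 1) = - Num.sg (x - 1).
Proof.
move=> x0; have -> : x^-1 - 1 = (1 - x) * x^-1 by rewrite mulrBl mul1r mulfV ?gt_eqF.
by rewrite sgrM sgrV (gtr0_sg x0) mulr1 -sgrN opprB.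
Qed.

Lemma sgr_expB1 (R : realFieldType) (x : R) k :
  0 < x -> (0 < k)%N -> Num.sg (x ^+ k - 1) = Num.sg (x - 1).
Proof.
move=> x0 k0; have k_neq0 : k != 0%N by rewrite -lt0n.
case: (ltrgtP x 1) => x1; last by rewrite x1 expr1n.
  by rewrite !ltr0_sg ?subr_lt0 // exprn_ilt1 ?ltW.
by rewrite !gtr0_sg ?subr_gt0 // exprn_egt1.
Qed.

Lemma sgr_divB1 (R : realFieldType) (a b : R) : 0 < b -> Num.sg (a / b - 1) = Num.sg (a - b).
Proof.
move=> b0; have -> : a / b - 1 = (a - b) / b by rewrite mulrBl divff ?gt_eqF.
by rewrite sgrM sgrV (gtr0_sg b0) mulr1.
Qed.

Section SignLogarithm.
Variables (R : realFieldType) (n : nat) (r : 'I_n -> R).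
Hypothesis r_gt0 : forall i, 0 < r i.

Definition zdot (a : {ffun 'I_n -> int}) (u : 'I_n -> R) : R := \sum_i (a i)%:~R * u i.
Definition zpow (a : {ffun 'I_n -> int}) : R := \prod_i r i ^ a i.

(* [u] behaves like the componentwise logarithm of [r] on the exponent vectors in [P]. *)
Definition sign_log (P : seq {ffun 'I_n -> int}) (u : 'I_n -> R) : Prop :=
  {in P, forall a, Num.sg (zdot a u) = Num.sg (zpow a - 1)}.

Definition zneg (a : {ffun 'I_n -> int}) : {ffun 'I_n -> int} := [ffun i => - a i].
Definition zcomb (a b : {ffun 'I_n -> int}) (c d : nat) : {ffun 'I_n -> int} :=
  [ffun i => c%:Z * a i - d%:Z * b i].
Definition set_coord (u : 'I_n -> R) (i0 : 'I_n) (t : R) : 'I_n -> R :=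
  fun i => if i == i0 then t else u i.

Lemma zpow_gt0 a : 0 < zpow a.
Proof. by apply: prodr_gt0 => i _; apply: exprz_gt0. Qed.

Lemma zpowN a : zpow (zneg a) = (zpow a)^-1.
Proof. by rewrite /zpow -prodfV; apply: eq_bigr => i _; rewrite ffunE invr_expz. Qed.

Lemma zdotN a u : zdot (zneg a) u = - zdot a u.
Proof. by rewrite /zdot -sumrN; apply: eq_bigr => i _; rewrite ffunE mulrNz mulNr. Qed.

Lemma zpow_comb a b c d : zpow (zcomb a b c d) = zpow a ^+ c / zpow b ^+ d.
Proof.
have r_unit i : r i \is a GRing.unit by rewrite unitfE gt_eqF.
rewrite /zpow -!prodrXl -prodfV -big_split /=; apply: eq_bigr => i _.
rewrite ffunE exprzDr // -invr_expz.
by rewrite !exprnP !exprz_exp [(a i * _)%R]mulrC [(b i * _)%R]mulrC.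
Qed.

Lemma zdot_comb a b c d u : zdot (zcomb a b c d) u = c%:R * zdot a u - d%:R * zdot b u.
Proof.
rewrite /zdot !mulr_sumr -sumrB; apply: eq_bigr => i _.
by rewrite ffunE intrD mulrNz !intrM -!pmulrn mulrBl !mulrA.
Qed.

Lemma zdot_set_coord a u i0 t :
  zdot a (set_coord u i0 t) = zdot a u + (a i0)%:~R * (t - u i0).
Proof.
rewrite /zdot (bigD1 i0) //= [in RHS](bigD1 i0) //= /set_coord eqxx.
rewrite (eq_bigr (fun i => (a i)%:~R * u i)); last by move=> i /negPf ->.
ring.
Qed.

Section Elimination.
Variables (i0 : 'I_n) (P : seq {ffun 'I_n -> int}).

Definition orient (a : {ffun 'I_n -> int}) := if 0 < a i0 then a else zneg a.
Definition pivots := [seq orient a | a : {ffun 'I_n -> int} <- P & a i0 != 0].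

(* One Fourier-Motzkin step: eliminate coordinate [i0] between every pair of pivots. *)
Definition eliminate := [seq a : {ffun 'I_n -> int} <- P | a i0 == 0] ++
  [seq zcomb a b `|b i0|%N `|a i0|%N | a <- pivots, b <- pivots].

Variable u : 'I_n -> R.
Hypothesis u_sign_log : sign_log eliminate u.

Definition cut q := u i0 - zdot q u / (q i0)%:~R.

Lemma pivot_gt0 q : q \in pivots -> 0 < q i0.
Proof.
case/mapP => a; rewrite mem_filter => /andP [a0 _] ->; rewrite /orient.
case: ifP => // /negbT; rewrite -leNgt => a_le0.
by rewrite ffunE oppr_gt0 lt_neqAle a0.
Qed.

Lemma pivot_abs q : q \in pivots -> (`|q i0|%N : int) = q i0.
Proof. by move=> qP; rewrite abszE gtr0_norm // pivot_gt0. Qed.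

Lemma zdot_pivot q : q \in pivots -> zdot q u = (q i0)%:~R * (u i0 - cut q).
Proof.
move=> qP; rewrite /cut opprB addrCA subrr addr0 mulrC divfK //.
by rewrite intr_eq0 gt_eqF // pivot_gt0.
Qed.

Lemma sg_zdot_pivot q t : q \in pivots ->
  Num.sg (zdot q (set_coord u i0 t)) = Num.sg (t - cut q).
Proof.
move=> qP; rewrite zdot_set_coord zdot_pivot // -mulrDr addrC subrKA.
by rewrite sgrM gtr0_sg ?mul1r // ltr0z pivot_gt0.
Qed.

Lemma sg_cutB a b : a \in pivots -> b \in pivots ->
  Num.sg (cut b - cut a) = Num.sg (zpow a ^+ `|b i0| - zpow b ^+ `|a i0|).
Proof.
move=> aP bP.
have abP : zcomb a b `|b i0|%N `|a i0|%N \in eliminate.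
  by rewrite mem_cat; apply/orP; right; apply/allpairsP; exists (a, b).
have := u_sign_log abP; rewrite zdot_comb zpow_comb !zdot_pivot // sgr_divB1; last first.
  by rewrite exprn_gt0 // zpow_gt0.
have abs_intr q : q \in pivots -> (`|q i0|%:R : R) = (q i0)%:~R.
  by move=> qP; rewrite -(pivot_abs qP) -pmulrn.
rewrite !abs_intr // => <-.
have -> : (b i0)%:~R * ((a i0)%:~R * (u i0 - cut a)) -
    (a i0)%:~R * ((b i0)%:~R * (u i0 - cut b)) =
    ((a i0)%:~R * (b i0)%:~R) * (cut b - cut a) :> R by ring.
rewrite sgrM [Num.sg (_ * _)]gtr0_sg ?mul1r //.
by apply: mulr_gt0; rewrite ltr0z pivot_gt0.
Qed.

Lemma exists_pivot_point : exists t,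
  {in pivots, forall q, Num.sg (t - cut q) = Num.sg (zpow q - 1)}.
Proof.
have abs_gt0 q : q \in pivots -> (0 < `|q i0|)%N by move=> qP; rewrite absz_gt0 gt_eqF ?pivot_gt0.
have [/hasP [q0 q0P /eqP q0_1] | /hasPn pow_neq1] := boolP (has (fun q => zpow q == 1) pivots).
  exists (cut q0) => q qP.
  by rewrite sg_cutB // q0_1 expr1n sgr_expB1 ?zpow_gt0 ?abs_gt0.
have [|t [Ht_gt Ht_lt]] := @exists_between _ [seq cut q | q <- pivots & 1 < zpow q]
                                             [seq cut q | q <- pivots & zpow q < 1].
  move=> _ _ /mapP [a + ->] /mapP [b + ->]; rewrite !mem_filter => /andP [a1 aP] /andP [b1 bP].
  rewrite -subr_gt0 -sgr_cp0 sg_cutB // sgr_cp0 subr_gt0.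
  apply: (@lt_trans _ _ 1); first by rewrite exprn_ilt1 ?ltW ?zpow_gt0 // -lt0n abs_gt0.
  by rewrite exprn_egt1 // -lt0n abs_gt0.
exists t => q qP; case: (ltrgtP (zpow q) 1) => q1.
- rewrite !ltr0_sg ?subr_lt0 //; apply: Ht_lt.
  by apply/mapP; exists q; rewrite // mem_filter q1.
- rewrite !gtr0_sg ?subr_gt0 //; apply: Ht_gt.
  by apply/mapP; exists q; rewrite // mem_filter q1.
- by have := pow_neq1 q qP; rewrite q1 eqxx.
Qed.

Lemma sign_log_eliminate : exists t, sign_log P (set_coord u i0 t).
Proof.
have [t Ht] := exists_pivot_point; exists t => a aP.
have [a0 | a_neq0] := eqVneq (a i0) 0.
  rewrite zdot_set_coord a0 mulr0z mul0r addr0; apply: u_sign_log.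
  by rewrite mem_cat mem_filter a0 eqxx aP.
have qP : orient a \in pivots by apply/mapP; exists a; rewrite // mem_filter a_neq0.
move: (sg_zdot_pivot t qP) (Ht _ qP); rewrite /orient; case: ifP => _ H1 H2.
  by rewrite H1 H2.
by rewrite -[LHS]opprK -sgrN -zdotN H1 H2 zpowN sgr_invB1 ?zpow_gt0 ?opprK.
Qed.

End Elimination.

Lemma eliminate_support (i0 : 'I_n) (P : seq {ffun 'I_n -> int}) :
  {in P, forall (a : {ffun 'I_n -> int}) (i : 'I_n), (i0 < i)%N -> a i = 0} ->
  {in eliminate i0 P, forall (a : {ffun 'I_n -> int}) (i : 'I_n), (i0 <= i)%N -> a i = 0}.
Proof.
move=> P_supp; have pivot_supp q : q \in pivots i0 P -> forall i : 'I_n, (i0 < i)%N -> q i = 0.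
  case/mapP => b; rewrite mem_filter => /andP [_ bP] -> i lt_i0i.
  by rewrite /orient; case: ifP => _; rewrite ?ffunE (P_supp b) ?oppr0.
move=> a; rewrite mem_cat mem_filter => /orP [/andP [/eqP a0 aP] | /allpairsP [[b c] [/= bP cP ->]]] i.
  by rewrite leq_eqVlt => /orP [/eqP/val_inj <- | /(P_supp _ aP)].
rewrite ffunE leq_eqVlt => /orP [/eqP/val_inj <- | lt_i0i].
  by rewrite (pivot_abs bP) (pivot_abs cP) mulrC subrr.
by rewrite (pivot_supp b bP i lt_i0i) (pivot_supp c cP i lt_i0i) !mulr0 subrr.
Qed.

Lemma exists_sign_log_supported k (P : seq {ffun 'I_n -> int}) : (k <= n)%N ->
  {in P, forall (a : {ffun 'I_n -> int}) (i : 'I_n), (k <= i)%N -> a i = 0} -> exists u, sign_log P u.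
Proof.
elim: k P => [|k IH] P kn P_supp.
  exists (fun _ => 0) => a aP.
  rewrite /zdot /zpow big1 ?sgr0 => [|i _]; last by rewrite mulr0.
  by rewrite big1 ?subrr ?sgr0 // => i _; rewrite P_supp ?expr0z.
have [|u Hu] := IH (eliminate (Ordinal kn) P) (ltnW kn).
  by apply: eliminate_support => a aP i; apply: P_supp.
by have [t Ht] := sign_log_eliminate Hu; exists (set_coord u (Ordinal kn) t).
Qed.

Theorem exists_sign_log (P : seq {ffun 'I_n -> int}) : exists u, sign_log P u.
Proof.
by apply: (@exists_sign_log_supported n) => // a _ i; rewrite leqNgt ltn_ord.
Qed.

End SignLogarithm.

(* a positive [c] with [c * b = a]; [1] is a junk value when [b = 0] *)
Definition pos_ratio (R : realFieldType) (a b : R) : R := if b == 0 then 1 else a / b.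

Lemma pos_ratio_gt0 (R : realFieldType) (a b : R) : Num.sg a = Num.sg b -> 0 < pos_ratio a b.
Proof.
rewrite /pos_ratio; case: eqP => [_ _ | /eqP b_neq0 sg_ab]; first exact: ltr01.
by rewrite -sgr_cp0 sgrM sgrV sg_ab -expr2 sqr_sg b_neq0.
Qed.

Lemma pos_ratioK (R : realFieldType) (a b : R) : Num.sg a = Num.sg b -> pos_ratio a b * b = a.
Proof.
rewrite /pos_ratio; case: eqP => [-> /eqP | /eqP b_neq0 _]; last by rewrite divfK.
by rewrite sgr0 sgr_eq0 mulr0 => /eqP.
Qed.

Lemma mulmx_orthonormal_proj (R : fieldType) n r p (S : 'M[R]_(n, r)) (A : 'M[R]_(n, p)) :
  S^T *m S = 1%:M -> (A^T <= S^T)%MS -> S *m (S^T *m A) = A.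
Proof.
move=> StS /submxP [D AtD]; have -> : A = S *m D^T by rewrite -[A]trmxK AtD trmx_mul trmxK.
by rewrite !mulmxA -(mulmxA S) StS mulmx1.
Qed.

Lemma det_eq0_ker (R : fieldType) r (A : 'M[R]_r) (c : 'cV[R]_r) :
  c != 0 -> A *m c = 0 -> \det A = 0.
Proof.
move=> c_neq0 Ac0; apply/eqP; rewrite -det_tr; apply/det0P; exists c^T.
  by rewrite -trmx0 (inj_eq trmx_inj).
by rewrite -trmx_mul Ac0 trmx0.
Qed.

Lemma prod_card_preim (R : comNzRingType) p q (f : 'I_p -> 'I_q) (G : 'I_q -> R) :
  \prod_a G (f a) = \prod_j G j ^+ #|[set a | f a == j]|.
Proof.
rewrite (partition_big f xpredT) //=; apply: eq_bigr => j _.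
rewrite (eq_bigr (fun _ => G j)); last by move=> a /eqP ->.
by rewrite prodr_const cardsE.
Qed.

Section Expansion.
Variables (R : rcfType) (n m : nat) (alpha beta : 'M[nat]_(n, m)).

Definition mon_eval (mu : monomial n m) (v : 'cV[R]_m) (x : 'cV[R]_n) : R :=
  (\prod_j v j 0 ^+ mu.1 j) * \prod_l (x l 0)^-1 ^+ mu.2 l.

Lemma mon_eval_gt0 mu v x : pos_vec v -> pos_vec x -> 0 < mon_eval mu v x.
Proof.
move=> v_gt0 x_gt0; apply: mulr_gt0; apply: prodr_gt0 => i _; apply: exprn_gt0 => //.
by rewrite invr_gt0.
Qed.

Lemma stoichE i j : stoich R alpha beta i j = (stoichZ alpha beta i j)%:~R.
Proof. by rewrite mxE /stoichZ intrB -!pmulrn. Qed.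

Lemma principal_minor_expand (I : {set 'I_n}) v x :
  principal_minor (- jacJ alpha beta v x) I =
  \sum_(p : 'S_#|I|) \sum_(g : {ffun 'I_#|I| -> 'I_m})
     (term_coef alpha beta p g)%:~R * mon_eval (term_mon p g) v x.
Proof.
rewrite /principal_minor /determinant; apply: eq_bigr => p _.
rewrite (eq_bigr (fun a => \sum_j
   (- (stoichZ alpha beta (enum_val a) j * (alpha (enum_val (p a)) j)%:Z))%:~R *
   (v j 0 * (x (enum_val (p a)) 0)^-1))); last first.
  move=> a _; rewrite !mxE -sumrN; apply: eq_bigr => j _.
  by rewrite stoichE mulrNz intrM -pmulrn mulNr !mulrA.
rewrite bigA_distr_bigA mulr_sumr; apply: eq_bigr => g _.
rewrite /term_coef /mon_eval /term_mon /= !big_split /=.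
rewrite (prod_card_preim g (fun j => v j 0)).
rewrite (prod_card_preim (fun a => enum_val (p a)) (fun l => (x l 0)^-1)).
rewrite rmorphM /= rmorph_prod /= rmorphXn /= rmorphN1 -!mulrA.
by congr (_ * (_ * (_ * _))); apply: eq_bigr => j _; rewrite ffunE.
Qed.

(* every monomial of [a_coef] has exponents at most [n], so it occurs in this list *)
Definition monomials : seq (monomial n m) :=
  [seq ([ffun j => nat_of_ord (f.1 j)], [ffun l => nat_of_ord (f.2 l)]) |
     f : ({ffun 'I_m -> 'I_n.+1} * {ffun 'I_n -> 'I_n.+1})%type].

Lemma monomials_uniq : uniq monomials.
Proof.
rewrite map_inj_uniq ?enum_uniq // => [[f1 f2] [g1 g2]] [/ffunP e1 /ffunP e2].
congr pair; apply/ffunP => i; apply: val_inj.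
  by have := e1 i; rewrite !ffunE.
by have := e2 i; rewrite !ffunE.
Qed.

Lemma term_mon_in_monomials (I : {set 'I_n}) (p : 'S_#|I|) (g : {ffun 'I_#|I| -> 'I_m}) :
  term_mon p g \in monomials.
Proof.
have card_lt (A : pred 'I_#|I|) : (#|A| < n.+1)%N.
  rewrite ltnS; apply: leq_trans (max_card _) _.
  by rewrite card_ord; apply: leq_trans (max_card _) _; rewrite card_ord.
apply/mapP; exists ([ffun j => inord #|[set a | g a == j]|],
                   [ffun l => inord #|[set a | enum_val (p a) == l]|]); first by rewrite mem_enum.
by congr pair; apply/ffunP => i; rewrite !ffunE /= inordK // cardsE.
Qed.

Lemma a_coef_expand s v x : a_coef alpha beta s v x =
  \sum_(mu <- monomials) (a_poly_coef alpha beta s mu)%:~R * mon_eval mu v x.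
Proof.
rewrite /a_coef /a_poly_coef.
transitivity (\sum_(I : {set 'I_n} | #|I| == s) \sum_(p : 'S_#|I|)
   \sum_(g : {ffun 'I_#|I| -> 'I_m}) \sum_(mu <- monomials)
     (if term_mon p g == mu then term_coef alpha beta p g else 0)%:~R * mon_eval mu v x).
  apply: eq_bigr => I _; rewrite principal_minor_expand.
  apply: eq_bigr => p _; apply: eq_bigr => g _.
  rewrite (bigD1_seq _ (term_mon_in_monomials p g) monomials_uniq) /= eqxx big1_seq ?addr0 //.
  by move=> mu /andP [ne _]; rewrite eq_sym (negPf ne) mul0r.
under eq_bigr => I _ do under eq_bigr => p _ do rewrite exchange_big.
under eq_bigr => I _ do rewrite exchange_big.
rewrite exchange_big; apply: eq_bigr => mu _.
rewrite rmorph_sum big_distrl; apply: eq_bigr => I _.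
rewrite rmorph_sum big_distrl; apply: eq_bigr => p _.
by rewrite rmorph_sum big_distrl.
Qed.

Lemma a_coef_gt0 s (v1 v2 : 'cV[R]_m) (x1 x2 : 'cV[R]_n) :
  (forall mu, 0 <= a_poly_coef alpha beta s mu) ->
  pos_vec v1 -> pos_vec x1 -> pos_vec v2 -> pos_vec x2 ->
  a_coef alpha beta s v1 x1 != 0 -> 0 < a_coef alpha beta s v2 x2.
Proof.
move=> coef_ge0 v1_gt0 x1_gt0 v2_gt0 x2_gt0; rewrite !a_coef_expand.
have [/hasP [mu0 mu0_in coef0_neq0] _ | /hasPn coef0 ] :=
  boolP (has (fun mu => a_poly_coef alpha beta s mu != 0) monomials); last first.
  rewrite big1_seq ?eqxx // => mu /andP [_ /coef0].
  by rewrite negbK => /eqP ->; rewrite mul0r.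
rewrite (bigD1_seq mu0) //= ?monomials_uniq //; apply: ltr_pwDl.
  by apply: mulr_gt0; [rewrite ltr0z lt_neqAle eq_sym coef0_neq0 coef_ge0 | exact: mon_eval_gt0].
apply: sumr_ge0 => mu _; apply: mulr_ge0; first by rewrite ler0z.
exact/ltW/mon_eval_gt0.
Qed.

End Expansion.

Section NetworkLemmas.
Variables (R : rcfType) (n m : nat) (alpha beta : 'M[nat]_(n, m)).

Lemma rates_gt0 (k : 'cV[R]_m) (x : 'cV[R]_n) : pos_vec k -> pos_vec x -> pos_vec (rates alpha k x).
Proof.
move=> k_gt0 x_gt0 j; rewrite mxE; apply: mulr_gt0 (k_gt0 j) _.
by apply: prodr_gt0 => i _; apply: exprn_gt0.
Qed.

(* [u] plays the role of [log x1 - log x2]. *)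
Lemma exists_secant_direction (x1 x2 : 'cV[R]_n) : pos_vec x1 -> pos_vec x2 ->
  exists u : 'I_n -> R,
    (forall i, Num.sg (u i) = Num.sg (x1 i 0 - x2 i 0)) /\
    (forall j, Num.sg (\sum_l (alpha l j)%:R * u l) =
               Num.sg (\prod_l x1 l 0 ^+ alpha l j - \prod_l x2 l 0 ^+ alpha l j)).
Proof.
move=> x1_gt0 x2_gt0; pose r i := x1 i 0 / x2 i 0.
have r_gt0 i : 0 < r i by rewrite divr_gt0.
pose unit_exp i : {ffun 'I_n -> int} := [ffun l => (l == i)%:Z].
pose col_exp j : {ffun 'I_n -> int} := [ffun l => (alpha l j)%:Z].
have [u Hu] := exists_sign_log r_gt0 ([seq unit_exp i | i : 'I_n] ++ [seq col_exp j | j : 'I_m]).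
exists u; split => [i | j].
  have := Hu (unit_exp i); rewrite mem_cat map_f ?mem_enum // => /(_ isT).
  rewrite /zdot /zpow (bigD1 i) //= [in X in _ = Num.sg (X - 1)](bigD1 i) //=.
  rewrite !big1 => [|l /negPf li|l /negPf li]; rewrite ?ffunE ?li ?mulr0z ?mul0r ?expr0z //.
  by rewrite eqxx mul1r expr1z addr0 mulr1 sgr_divB1.
have := Hu (col_exp j); rewrite mem_cat map_f ?mem_enum ?orbT // => /(_ isT).
have -> : zdot (col_exp j) u = \sum_l (alpha l j)%:R * u l.
  by apply: eq_bigr => l _; rewrite ffunE -pmulrn.
have prod2_gt0 : 0 < \prod_l x2 l 0 ^+ alpha l j by apply: prodr_gt0 => l _; apply: exprn_gt0.
move=> ->; rewrite -(sgr_divB1 _ prod2_gt0) -prodfV -big_split /=.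
by congr (Num.sg (_ - 1)); apply: eq_bigr => l _; rewrite ffunE -exprnP exprMn exprVn.
Qed.

(* A multivariate mean value theorem for mass-action rates. *)
Lemma jacJ_secant (k : 'cV[R]_m) (x1 x2 : 'cV[R]_n) : pos_vec k -> pos_vec x1 -> pos_vec x2 ->
  exists v w, [/\ pos_vec v, pos_vec w &
    jacJ alpha beta v w *m (x1 - x2) = stoich R alpha beta *m (rates alpha k x1 - rates alpha k x2)].
Proof.
move=> k_gt0 x1_gt0 x2_gt0.
have [u [sg_u sg_alpha_u]] := exists_secant_direction x1_gt0 x2_gt0.
pose D j := \sum_l (alpha l j)%:R * u l.
pose E j := \prod_l x1 l 0 ^+ alpha l j - \prod_l x2 l 0 ^+ alpha l j.
pose w : 'cV[R]_n := \col_i pos_ratio (x1 i 0 - x2 i 0) (u i).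
pose v : 'cV[R]_m := \col_j (k j 0 * pos_ratio (E j) (D j)).
have w_gt0 : pos_vec w by move=> i; rewrite mxE pos_ratio_gt0 // sg_u.
have v_gt0 : pos_vec v.
  by move=> j; rewrite mxE mulr_gt0 ?pos_ratio_gt0 ?sg_alpha_u.
have wu i : w i 0 * u i = x1 i 0 - x2 i 0 by rewrite mxE pos_ratioK // sg_u.
have vD j : v j 0 * D j = k j 0 * E j by rewrite mxE -mulrA pos_ratioK // sg_alpha_u.
clearbody v w; exists v, w; split => //; apply/matrixP => i o; rewrite !mxE.
under eq_bigr => l _ do rewrite !mxE big_distrl.
rewrite exchange_big; apply: eq_bigr => j _ /=.
rewrite (ord1 o) !mxE -mulrBr -vD /D mulr_sumr mulr_sumr.
apply: eq_bigr => l _; rewrite -wu; field.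
by rewrite gt_eqF.
Qed.

Lemma a_coef_mulmx_orthonormal s (S : 'M[R]_(n, s)) v x :
  S^T *m S = 1%:M -> ((jacJ alpha beta v x)^T <= S^T)%MS ->
  a_coef alpha beta s v x = \det (S^T *m - jacJ alpha beta v x *m S).
Proof.
move=> StS JS; rewrite /a_coef /principal_minor.
rewrite -[in LHS](mulmx_orthonormal_proj StS (A := - jacJ alpha beta v x)).
  by rewrite sum_principal_minors_mulmx.
by rewrite linearN /= eqmx_opp.
Qed.

End NetworkLemmas.


Theorem theorem4 (R : rcfType) (n m : nat) (alpha beta : 'M[nat]_(n, m))
  (* standing assumption: a positive conservation law *)
  (Hlambda : exists lambda : 'cV[R]_n,
      pos_vec lambda /\ lambda^T *m stoich R alpha beta = 0)
  (* standing assumption: im J(v,x) = im N on the positive orthant *)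
  (HJ : forall (v : 'cV[R]_m) (x : 'cV[R]_n), pos_vec v -> pos_vec x ->
      ((jacJ alpha beta v x)^T == (stoich R alpha beta)^T)%MS)
  (S : 'M[R]_(n, \rank (stoich R alpha beta)))
  (Z : 'M[R]_(n, n - \rank (stoich R alpha beta)))
  (HS : S^T *m S = 1%:M /\ (S^T == (stoich R alpha beta)^T)%MS)
  (HZ : Z^T *m Z = 1%:M /\ (Z^T == kermx (stoich R alpha beta))%MS)
  (k : 'cV[R]_m) (Hk : pos_vec k)
  (eta : 'cV[R]_(n - \rank (stoich R alpha beta)))
  (Hint : exists xi, pos_vec (S *m xi + Z *m eta))
  (Hbd : forall xi, nneg_vec (S *m xi + Z *m eta) ->
      ~ pos_vec (S *m xi + Z *m eta) ->
      S^T *m stoich R alpha beta *m rates alpha k (S *m xi + Z *m eta) != 0)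
  (Hmulti : exists xi1 xi2, xi1 != xi2 /\
      nneg_vec (S *m xi1 + Z *m eta) /\
      S^T *m stoich R alpha beta *m rates alpha k (S *m xi1 + Z *m eta) = 0 /\
      nneg_vec (S *m xi2 + Z *m eta) /\
      S^T *m stoich R alpha beta *m rates alpha k (S *m xi2 + Z *m eta) = 0)
  (Hreg : forall xi, nneg_vec (S *m xi + Z *m eta) ->
      S^T *m stoich R alpha beta *m rates alpha k (S *m xi + Z *m eta) = 0 ->
      a_coef alpha beta (\rank (stoich R alpha beta))
        (rates alpha k (S *m xi + Z *m eta)) (S *m xi + Z *m eta) != 0) :
  exists mu : monomial n m,
    (a_poly_coef alpha beta (\rank (stoich R alpha beta)) mu < 0)%R.
Proof.
apply: NNPP => no_neg_coef.
have coef_ge0 mu : 0 <= a_poly_coef alpha beta (\rank (stoich R alpha beta)) mu.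
  by rewrite leNgt; apply/negP => coef_lt0; apply: no_neg_coef; exists mu.
have [StS /andP [_ NS]] := HS.
have interior xi : nneg_vec (S *m xi + Z *m eta) ->
    S^T *m stoich R alpha beta *m rates alpha k (S *m xi + Z *m eta) = 0 ->
    pos_vec (S *m xi + Z *m eta).
  by move=> xi_nneg xi_eq; apply: NNPP => /(Hbd _ xi_nneg); rewrite xi_eq eqxx.
have steady x : S^T *m stoich R alpha beta *m rates alpha k x = 0 ->
    stoich R alpha beta *m rates alpha k x = 0.
  by move=> x_eq; rewrite -(mulmx_orthonormal_proj StS NS) -mulmxA x_eq mulmx0.
have [xi1 [xi2 [neq_xi [nn1 [eq1 [nn2 eq2]]]]]] := Hmulti.
have x1_gt0 := interior _ nn1 eq1; have x2_gt0 := interior _ nn2 eq2.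
have [v [w [v_gt0 w_gt0 secant]]] := jacJ_secant alpha beta Hk x1_gt0 x2_gt0.
have JS : ((jacJ alpha beta v w)^T <= S^T)%MS.
  by case/andP: (HJ _ _ v_gt0 w_gt0) => JN _; apply: submx_trans JN NS.
have a_vw_eq0 : a_coef alpha beta (\rank (stoich R alpha beta)) v w = 0.
  rewrite (a_coef_mulmx_orthonormal StS JS).
  apply: (@det_eq0_ker _ _ _ (xi1 - xi2)); first by rewrite subr_eq0.
  rewrite -!mulmxA.
  have -> : S *m (xi1 - xi2) = (S *m xi1 + Z *m eta) - (S *m xi2 + Z *m eta).
    by rewrite mulmxBr opprD addrACA subrr addr0.
  by rewrite mulNmx secant mulmxBr !steady // subrr oppr0 mulmx0.
have := a_coef_gt0 coef_ge0 (rates_gt0 alpha Hk x1_gt0) x1_gt0 v_gt0 w_gt0 (Hreg _ nn1 eq1).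
by rewrite a_vw_eq0 ltxx.
Qed.
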